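(* Let $i\ge1$, $n=4i$, and let $C$ be a ceiling coalition of the $i$-bit roof game $G_{i\text{-bit}}$ on players $\{1,\dots,n\}$ such that $C$ has at least two distinct direct left-shifts. Let $p\in C$ be a player with $p\ge2$ and $p-1\notin C$ (so that $(C\setminus\{p\})\cup\{p-1\}$ is a direct left-shift of $C$), and let $a$ be such that $p$ is the $a$-th smallest element of $C$. Then $p=2a$.
   Context: Players are $N=\{1,\dots,n\}$ with $n=4i$. A coalition $S'$ is a direct left-shift of $S$ if there is $m\in S$, $2\le m\le n$, $m-1\notin S$, with $S'=(S\setminus\{m\})\cup\{m-1\}$; a left-shift of $S$ is obtained by one or more successive direct left-shifts. For $k\in\{0,1,\dots,2^i-1\}$ with $i$-bit binary representation $b_1b_2\cdots b_i$ ($b_1$ most significant), the $(k,i)$-encoding coalition is $S_{k,i}=\bigcup_{j=1}^{i}B_j$ where $B_j=\{4(j-1)+2,4(j-1)+3\}$ if $b_j=0$ and $B_j=\{4(j-1)+1,4(j-1)+4\}$ if $b_j=1$ (e.g. $S_{2,2}=\{1,4,6,7\}$). The $i$-bit roof game $G_{i\text{-bit}}$ is the simple game on $N$ in which a coalition is winning iff it contains some $S_{k,i}$ or some left-shift of some $S_{k,i}$; it is a canonical linear game whose roof coalitions (minimal winning coalitions all of whose left-shifts... equivalently all of whose right-shifts are losing) are exactly the $S_{k,i}$. A maximal losing coalition is a losing coalition $S$ such that $S\cup\{m\}$ is winning for all $m\notin S$; a ceiling coalition is a maximal losing coalition all of whose left-shifts are winning. *)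

From mathcomp Require Import all_boot.
Set Implicit Arguments. Unset Strict Implicit. Unset Printing Implicit Defensive.

(* Players N = {1,...,n} are represented as the elements x of 'I_n.+1 with
   1 <= x (so the nat value of an ordinal IS the player number; the ordinal 0
   is not a player). *)

Definition players (n : nat) : {set 'I_n.+1} := [set x : 'I_n.+1 | 0 < val x].

Definition is_coalition (n : nat) (S : {set 'I_n.+1}) : Prop := S \subset players n.

Definition direct_lshift (n : nat) (S S' : {set 'I_n.+1}) : Prop :=
  exists (m m' : 'I_n.+1),
    [/\ m \in S, 2 <= val m, val m' = (val m).-1, m' \notin S
      & S' = m' |: (S :\ m)].

Inductive lshift (n : nat) (S : {set 'I_n.+1}) : {set 'I_n.+1} -> Prop :=
  | lshift_one : forall S', direct_lshift S S' -> lshift S S'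
  | lshift_step : forall T S', lshift S T -> direct_lshift T S' -> lshift S S'.

(* j-th bit (j = 1..i, b_1 most significant) of the i-bit representation of k *)
Definition bit (i k j : nat) : bool := odd (k %/ 2 ^ (i - j)).

Definition enc_coalition (i k : nat) : {set 'I_(4 * i).+1} :=
  [set x : 'I_(4 * i).+1 | [exists j : 'I_i,
     let jj := (val j).+1 in
     if bit i k jj
     then (val x == 4 * (jj - 1) + 1) || (val x == 4 * (jj - 1) + 4)
     else (val x == 4 * (jj - 1) + 2) || (val x == 4 * (jj - 1) + 3)]].

Definition roof_winning (i : nat) (S : {set 'I_(4 * i).+1}) : Prop :=
  exists k, k < 2 ^ i /\
    exists T, (T = enc_coalition i k \/ lshift (enc_coalition i k) T) /\ T \subset S.

Definition roof_losing (i : nat) (S : {set 'I_(4 * i).+1}) : Prop :=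
  ~ roof_winning S.

Definition max_losing (i : nat) (S : {set 'I_(4 * i).+1}) : Prop :=
  [/\ is_coalition S, roof_losing S &
      forall m : 'I_(4 * i).+1, m \in players (4 * i) -> m \notin S ->
        roof_winning (m |: S)].

Definition ceiling (i : nat) (S : {set 'I_(4 * i).+1}) : Prop :=
  max_losing S /\ forall S', lshift S S' -> roof_winning S'.

(* Write [card_below S x] for the number of members of S smaller than x.  A direct left-shift
   moving m to m - 1 raises this count by one exactly at m, and conversely a coalition whose
   counts dominate those of A contains a left-shift of A; hence S is winning iff its counts
   dominate those of some S_k.  If C is a ceiling, the winning shift of C at p is witnessed by an
   S_k beating C by one below p, while another direct left-shift of C, which leaves the count
   below p unchanged, is witnessed by an S_k' not beating C there.  Two encoding coalitions have
   different counts below p only if p is the second or fourth player of its block, and then p is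
   twice the larger count, i.e. twice the rank of p in C. *)

From mathcomp Require Import all_boot zify.
Set Implicit Arguments. Unset Strict Implicit. Unset Printing Implicit Defensive.

Section CardBelow.

Variable n : nat.
Implicit Types (A B S : {set 'I_n.+1}) (o : 'I_n.+1).

Definition card_below A x := #|[set y in A | val y < x]|.

Definition dominated A B := forall x, card_below A x <= card_below B x.

Definition weight A := \sum_(y in A) val y.

Lemma card_below_sum A x : card_below A x = \sum_(y in A) (val y < x : nat).
Proof.
rewrite /card_below -sum1_card [LHS]big_mkcond [RHS]big_mkcond /=.
by apply: eq_bigr => y _; rewrite inE; case: (y \in A); case: (val y < x).
Qed.

Lemma card_below0 A : card_below A 0 = 0.
Proof. by apply/eqP; rewrite cards_eq0; apply/eqP/setP => y; rewrite !inE ltn0 andbF. Qed.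

Lemma card_belowS A o : card_below A (val o).+1 = card_below A (val o) + (o \in A).
Proof.
rewrite !card_below_sum; case oA: (o \in A); last first.
  rewrite addn0; apply: eq_bigr => y yA; rewrite ltnS leq_eqVlt val_eqE.
  by case: eqVneq yA oA => [-> ->|].
rewrite (big_setD1 o oA) [in RHS](big_setD1 o oA) /= ltnSn ltnn addnC; congr (_ + _).
by apply: eq_bigr => y /setD1P[yo _]; rewrite ltnS leq_eqVlt val_eqE (negbTE yo).
Qed.

Lemma card_below_mono A x y : x <= y -> card_below A x <= card_below A y.
Proof.
move=> xy; apply: subset_leq_card; apply/subsetP => z; rewrite !inE => /andP[-> zx].
exact: leq_trans zx xy.
Qed.

Lemma card_below_flat A x y : x <= y -> (forall o, o \in A -> x <= val o -> y <= val o) ->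
  card_below A y = card_below A x.
Proof.
move=> xy gap; apply: eq_card => z; rewrite !inE; case zA: (z \in A) => //=.
case: (ltnP (val z) x) => [zx | xz]; first by rewrite (leq_trans zx xy).
by rewrite ltnNge (gap z zA xz).
Qed.

Lemma subset_dominated A B : A \subset B -> dominated A B.
Proof.
move=> AB x; apply: subset_leq_card; apply/subsetP => z; rewrite !inE => /andP[zA ->].
by rewrite (subsetP AB).
Qed.

Lemma card_below_inj A B : card_below A =1 card_below B -> A = B.
Proof.
move=> eAB; apply/setP => o; move: (card_belowS A o); rewrite !eAB card_belowS.
by move/eqP; rewrite eqn_add2l; case: (o \in A); case: (o \in B).
Qed.

(* Moving [m] to [m - 1] only changes which side of [m] itself the moved player lies on. *)
Lemma card_below_shift A m m' x : m \in A -> m' \notin A -> val m' = (val m).-1 -> 0 < val m ->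
  card_below (m' |: (A :\ m)) x = card_below A x + (x == val m).
Proof.
move=> mA m'A vm' m0; rewrite !card_below_sum big_setU1 /=; last first.
  by rewrite in_setD1 (negbTE m'A) andbF.
rewrite [in RHS](big_setD1 m mA) /= vm'.
set s := \sum_(_ in _) _; case: (ltngtP x (val m)) => [xm | mx | ->]; lia.
Qed.

Lemma direct_lshift_card_below A B : direct_lshift A B ->
  exists m : 'I_n.+1, forall x, card_below B x = card_below A x + (x == val m).
Proof.
case=> m [m'] [mA m2 vm' m'A ->]; exists m => x.
by apply: card_below_shift => //; apply: leq_trans m2.
Qed.

Lemma lshift_dominated A B : lshift A B -> dominated A B.
Proof.
have direct_dom C D : direct_lshift C D -> dominated C D.
  by case/direct_lshift_card_below => m eD x; rewrite eD leq_addr.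
elim=> [B' /direct_dom // | T B' _ IH /direct_dom dom x].
exact: leq_trans (IH x) (dom x).
Qed.

Lemma direct_lshift_other A B1 B2 x : B1 != B2 -> direct_lshift A B1 -> direct_lshift A B2 ->
  exists2 B, direct_lshift A B & card_below B x = card_below A x.
Proof.
move=> B12 dB1 dB2.
have [m1 e1] := direct_lshift_card_below dB1; have [m2 e2] := direct_lshift_card_below dB2.
case: (eqVneq x (val m1)) => [xm1 | xm1]; last by exists B1; rewrite // e1 (negbTE xm1) addn0.
case: (eqVneq x (val m2)) => [xm2 | xm2]; last by exists B2; rewrite // e2 (negbTE xm2) addn0.
by case/eqP: B12; apply: card_below_inj => y; rewrite e1 e2 -xm1 -xm2.
Qed.

Lemma direct_lshift_weight A B : direct_lshift A B -> weight B < weight A.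
Proof.
case=> m [m'] [mA m2 vm' m'A ->]; rewrite /weight big_setU1 /=; last first.
  by rewrite in_setD1 (negbTE m'A) andbF.
rewrite [X in _ < X](big_setD1 m mA) /= vm' ltn_add2r ltn_predL.
exact: ltnW m2.
Qed.

Lemma lshift_cons A B C : direct_lshift A B -> lshift B C -> lshift A C.
Proof.
move=> dAB; elim=> [C' dBC | T C' _ IH dTC]; last exact: lshift_step IH dTC.
exact: lshift_step (lshift_one dAB) dBC.
Qed.

Lemma dominated_first_deficit A S m0 : dominated A S -> m0 \in A -> m0 \notin S ->
  exists z : 'I_n.+1,
    [/\ z \in S, z \notin A, val z < val m0 & card_below A (val z).+1 < card_below S (val z).+1].
Proof.
move=> dAS m0A m0S.
have def_m0 : card_below A (val m0) < card_below S (val m0).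
  rewrite ltn_neqAle dAS andbT; apply/eqP => e.
  by have := dAS (val m0).+1; rewrite !card_belowS e m0A (negbTE m0S) addn1 addn0 ltnn.
have ex_def : exists x, card_below A x < card_below S x by exists (val m0).
case: (ex_minnP ex_def) => [[|z]]; first by rewrite !card_below0.
move=> def_z min_z; have zm0 : z < val m0 := min_z _ def_m0.
pose oz : 'I_n.+1 := Ordinal (ltn_trans zm0 (ltn_ord m0)).
have eq_z : card_below A z = card_below S z.
  by apply/eqP; rewrite eqn_leq dAS leqNgt; apply/negP => /min_z; rewrite ltnn.
exists oz; split => //; move: def_z; rewrite (card_belowS A oz) (card_belowS S oz) /= eq_z ltn_add2l;
  by case: (oz \in A); case: (oz \in S).
Qed.

(* Shift left the first member of [A] beyond the first position where [S] gets ahead of [A]. *)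
Lemma dominated_direct_lshift A S : S \subset players n -> dominated A S -> ~~ (A \subset S) ->
  exists2 B, direct_lshift A B & dominated B S.
Proof.
move=> SP dAS /subsetPn[m0 m0A m0S].
have [z [zS zA zm0 def_z]] := dominated_first_deficit dAS m0A m0S.
have z0 : 0 < val z by move/subsetP: SP => /(_ z zS); rewrite inE.
have m0P : m0 \in [pred y in A | val z < val y] by rewrite inE m0A.
case: (arg_minnP val m0P) => m /andP[mA zm] min_m.
pose m' : 'I_n.+1 := Ordinal (leq_ltn_trans (leq_pred _) (ltn_ord m)).
have vm' : val m' = (val m).-1 by [].
have m'A : m' \notin A.
  apply/negP => m'A; case: (ltngtP (val z) (val m).-1) => [zm' | | zm'].
  - have /min_m : m' \in [pred y in A | val z < val y] by rewrite inE m'A vm'.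
    by rewrite vm'; lia.
  - by lia.
  - have zm'_eq : z = m' by apply: val_inj; rewrite vm'.
    by rewrite zm'_eq m'A in zA.
exists (m' |: (A :\ m)); first by exists m, m'; split => //; exact: leq_ltn_trans z0 zm.
move=> y; rewrite (card_below_shift _ mA m'A) //=; last exact: ltn_trans z0 zm.
case: (eqVneq y (val m)) => [-> | _]; last by rewrite addn0 dAS.
rewrite addn1 (@card_below_flat A (val z).+1) //; last first.
  by move=> o oA zo; apply: min_m; exact/andP.
exact: leq_trans def_z (card_below_mono S zm).
Qed.

Lemma dominated_lshift A S : S \subset players n -> dominated A S ->
  exists T, (T = A \/ lshift A T) /\ T \subset S.
Proof.
move=> SP; have [N] := ubnP (weight A); elim: N A => // N IH A wA dAS.
case: (boolP (A \subset S)) => [AS | nAS]; first by exists A; split; first left.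
have [B dAB dBS] := dominated_direct_lshift SP dAS nAS.
have [T [[->|lBT] TS]] := IH B (leq_trans (direct_lshift_weight dAB) (ltnSE wA)) dBS.
  by exists B; split => //; right; apply: lshift_one.
by exists T; split => //; right; apply: lshift_cons lBT.
Qed.

End CardBelow.

Section RoofGame.

Variable i : nat.
Implicit Types (S : {set 'I_(4 * i).+1}) (k : nat).

(* Offsets [s] in [0, 4) of the members of the block B_j, whose players are 4(j-1)+1+s. *)
Definition block_offset (b : bool) (s : nat) : bool :=
  if b then (s == 0) || (s == 3) else (s == 1) || (s == 2).

Lemma mem_enc_coalition k J s (o : 'I_(4 * i).+1) : J < i -> s < 4 -> val o = 4 * J + s.+1 ->
  (o \in enc_coalition i k) = block_offset (bit i k J.+1) s.
Proof.
move=> Ji s4; case: o => x lt_x /= vx; rewrite inE /block_offset; apply/existsP/idP.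
- case=> [[j lt_j]] /=; rewrite subn1 /= => h.
  have ej : j = J by move: h; case: (bit _ _ _) => /orP[] /eqP; lia.
  by move: h; rewrite ej; case: (bit _ _ _) => /orP[] /eqP; lia.
- move=> h; exists (Ordinal Ji); rewrite /= subn1 /=.
  by move: h; case: (bit _ _ _) => /orP[] /eqP; lia.
Qed.

Lemma enc_coalition_players k : enc_coalition i k \subset players (4 * i).
Proof.
by apply/subsetP => o; rewrite !inE => /existsP[j] /=; case: (bit _ _ _) => /orP[] /eqP; lia.
Qed.

Lemma card_below_enc_block k J t : J < i -> t <= 4 ->
  card_below (enc_coalition i k) (4 * J + t).+1 =
  card_below (enc_coalition i k) (4 * J).+1 + count (block_offset (bit i k J.+1)) (iota 0 t).
Proof.
move=> Ji; set b := bit i k J.+1; elim: t => [|t IH] t4; first by rewrite !addn0.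
have lt_o : 4 * J + t.+1 < (4 * i).+1 by lia.
pose o : 'I_(4 * i).+1 := Ordinal lt_o.
have count_iotaS :
    count (block_offset b) (iota 0 t.+1) = count (block_offset b) (iota 0 t) + block_offset b t.
  by rewrite -addn1 iotaD count_cat /= addn0.
rewrite count_iotaS -[(4 * J + t.+1).+1]/(val o).+1 card_belowS (@mem_enc_coalition k J t) //.
by rewrite /= addnS IH ?(ltnW t4) // addnA.
Qed.

Lemma card_below_enc_start k J : J <= i -> card_below (enc_coalition i k) (4 * J).+1 = 2 * J.
Proof.
elim: J => [|J IH] Ji.
  rewrite muln0 (card_belowS _ ord0) card_below0.
  have /negbTE -> // : ord0 \notin enc_coalition i k.
  by apply/negP => /(subsetP (enc_coalition_players k)); rewrite inE.
have -> : 4 * J.+1 = 4 * J + 4 by rewrite mulnS addnC.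
rewrite card_below_enc_block // IH; last exact: ltnW.
by case: (bit _ _ _) => /=; lia.
Qed.

Lemma card_below_enc k J s : J < i -> s < 4 ->
  card_below (enc_coalition i k) (4 * J + s).+1 =
  2 * J + count (block_offset (bit i k J.+1)) (iota 0 s).
Proof. by move=> Ji s4; rewrite card_below_enc_block ?card_below_enc_start // ltnW. Qed.

Lemma card_below_enc_lt k1 k2 u : 0 < u <= 4 * i ->
  card_below (enc_coalition i k2) u < card_below (enc_coalition i k1) u ->
  u = 2 * card_below (enc_coalition i k1) u.
Proof.
move=> /andP[u0 ui].
have -> : u = (4 * (u.-1 %/ 4) + u.-1 %% 4).+1 by rewrite mulnC -divn_eq prednK.
have Ji : u.-1 %/ 4 < i by lia.
rewrite !card_below_enc ?ltn_mod // ltn_add2l.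
move: (u.-1 %/ 4) (u.-1 %% 4) (ltn_mod u.-1 4) (bit i k1 _) (bit i k2 _) => J s s4 b1 b2.
have : count (block_offset b2) (iota 0 s) < count (block_offset b1) (iota 0 s) ->
    s.+1 = 2 * count (block_offset b1) (iota 0 s).
  by case: b1; case: b2; case: s s4 => [|[|[|[|s]]]].
move=> h /h; lia.
Qed.

Lemma roof_winning_dominated S : roof_winning S ->
  exists2 k, k < 2 ^ i & dominated (enc_coalition i k) S.
Proof.
case=> k [lt_k [T [enc_T TS]]]; exists k => // x.
apply: leq_trans (subset_dominated TS x); case: enc_T => [-> // | /lshift_dominated]; exact.
Qed.

Lemma dominated_roof_winning S k : S \subset players (4 * i) -> k < 2 ^ i ->
  dominated (enc_coalition i k) S -> roof_winning S.
Proof. by move=> SP lt_k /(dominated_lshift SP) enc_S; exists k; split. Qed.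

Lemma roof_losing_excess S S' u : S \subset players (4 * i) -> roof_losing S -> roof_winning S' ->
  (forall x, card_below S' x = card_below S x + (x == u)) ->
  exists k, card_below (enc_coalition i k) u = (card_below S u).+1.
Proof.
move=> SP losS /roof_winning_dominated[k lt_k domS'] eS'; exists k; apply/eqP.
have := domS' u; rewrite eS' eqxx addn1 => le_u1.
rewrite eqn_leq le_u1 ltnNge /=.
apply/negP => le_u; apply: losS; apply: (dominated_roof_winning SP lt_k) => x.
case: (eqVneq x u) => [-> // | ne_xu].
by have := domS' x; rewrite eS' (negbTE ne_xu) addn0.
Qed.

End RoofGame.

Theorem lemma2 (i : nat) (C : {set 'I_(4 * i).+1}) (p : 'I_(4 * i).+1) (a : nat) :
  1 <= i ->
  ceiling C ->
  (exists S1 S2, [/\ S1 != S2, direct_lshift C S1 & direct_lshift C S2]) ->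
  p \in C -> 2 <= val p ->
  (forall q : 'I_(4 * i).+1, val q = (val p).-1 -> q \notin C) ->
  a = #|[set x in C | val x <= val p]| ->
  val p = 2 * a.
Proof.
move=> _ [[CP losC _] ceilC] [S1 [S2 [S12 dS1 dS2]]] pC p2 p'C ->.
pose p' : 'I_(4 * i).+1 := Ordinal (leq_ltn_trans (leq_pred _) (ltn_ord p)).
have vp' : val p' = (val p).-1 by [].
have dSp : direct_lshift C (p' |: (C :\ p)) by exists p, p'; split; rewrite ?p'C.
have [k1 excess_k1] := roof_losing_excess CP losC (ceilC _ (lshift_one dSp))
  (fun x => card_below_shift x pC (p'C _ vp') vp' (ltnW p2)).
have [S' dS' eS'] := direct_lshift_other (val p) S12 dS1 dS2.
have [k2 _ dom_k2] := roof_winning_dominated (ceilC _ (lshift_one dS')).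
have lt_k21 : card_below (enc_coalition i k2) (val p) < card_below (enc_coalition i k1) (val p).
  by rewrite excess_k1 ltnS -eS' dom_k2.
rewrite (_ : #|_| = card_below C (val p).+1) // card_belowS pC addn1 -excess_k1.
by apply: card_below_enc_lt lt_k21; rewrite (ltnW p2); exact: ltn_ord p.
Qed.
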